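(* Let $(\Gamma,d)$, $\rho$, $S_m$, $O(g)$ be as in the context and let $\Delta$ be the constant of the context. Then for all $n$ and all $r>n+\Delta$, for each $g\in S_r$, $h\in S_n$ and $\xi\in O(g)$, \[\frac{dh_*\rho}{d\rho}(\xi)=e^{-\delta_\Gamma\beta_g(h,e)+O(1)},\] with $O(1)$ bounded independently of $n,r,g,h,\xi$.
   Context: $\Gamma$ is a finitely generated group acting properly cocompactly by isometries on a proper quasiruled hyperbolic space $(X,d)$, basepoint $x_0$, $d(g,h)=d(g.x_0,h.x_0)$; $(\Gamma,d)$ is a proper quasiruled hyperbolic space with visual boundary $\partial\Gamma$. $\delta_\Gamma=\limsup_m\frac1m\log\#B_m$ with $B_m=\{g:d(g,e)\le m\}$; $S_m=B_m\setminus B_{m-k}$ for a fixed $k$. $\beta_g(x,y)=d(g,x)-d(g,y)$. $\rho=\rho_e$ where $\{\rho_x\}$ is the Patterson–Sullivan family: $\Gamma$-equivariant ($g_*\rho_x=\rho_{g.x}$) mutually absolutely continuous probability measures with $\frac{d\rho_y}{d\rho_x}(\xi)=e^{-\delta_\Gamma\beta_\xi(y,x)+O(1)}$, $\beta_\xi$ the Busemann function at $\xi$. $O(g)$ is the set of $\xi\in\partial\Gamma$ such that some quasiruler ray from $e$ to $\xi$ meets the closed $C$-ball about $g$, for a fixed $C$. $\Delta$ is a constant (depending only on $(\Gamma,d)$, namely the maximal thickness of quasitriangles) for which there is $R$ with $|\beta_\xi(h,e)-\beta_g(h,e)|\le R$ whenever $r>n+\Delta$, $g\in S_r$, $\xi\in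 O(g)$, $h\in S_n$. *)

From HB Require Import structures.
From mathcomp Require Import all_boot all_order all_algebra.
From mathcomp Require Import finmap.
From mathcomp Require Import all_classical all_reals all_analysis.
Set Implicit Arguments. Unset Strict Implicit. Unset Printing Implicit Defensive.
Import Order.TTheory GRing.Theory Num.Theory.
Local Open Scope classical_set_scope.
Local Open Scope ring_scope.

Definition orbit_dist (Gam X : Type) (R : realType) (dX : X -> X -> R)
  (act : Gam -> X -> X) (x0 : X) (g h : Gam) : R := dX (act g x0) (act h x0).

Definition ballG (Gam : Type) (R : realType) (d : Gam -> Gam -> R) (e : Gam)
  (m : R) : set Gam := [set g | d g e <= m].

Definition sphereG (Gam : Type) (R : realType) (d : Gam -> Gam -> R) (e : Gam)
  (k : R) (m : R) : set Gam := ballG d e m `\` ballG d e (m - k).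

Definition busG (Gam : Type) (R : realType) (d : Gam -> Gam -> R)
  (g x y : Gam) : R := d g x - d g y.

Definition growth_seq (Gam : choiceType) (R : realType) (d : Gam -> Gam -> R)
  (e : Gam) (m : nat) : \bar R :=
  ((ln ((#|` fset_set (ballG d e m%:R)|)%fset)%:R) / m%:R)%:E.

Definition is_RN_deriv (dsp : measure_display) (T : measurableType dsp)
  (R : realType) (nu mu : set T -> \bar R) (f : T -> R) : Prop :=
  [/\ measurable_fun setT f, (forall x, 0 <= f x) &
      forall A, measurable A -> nu A = (\int[mu]_(x in A) (f x)%:E)%E].

From HB Require Import structures.
From mathcomp Require Import all_boot all_order all_algebra.
From mathcomp Require Import all_classical all_reals all_analysis.
From mathcomp Require Import lra.
Import Order.TTheory GRing.Theory Num.Theory.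
Local Open Scope classical_set_scope.
Local Open Scope ring_scope.

(* By equivariance of the Patterson-Sullivan family, h_* rho_e = rho_h, so the
   derivative in question is d rho_h / d rho_e = exp(-delta beta_xi(h,e) + O(1)).
   On the shadow O(g) the Busemann function beta_xi(h,e) is within a uniform R0
   of beta_g(h,e), which only enlarges the error term by |delta| R0. *)

Lemma left_group_mulg1 {T : Type} {mul : T -> T -> T} {e : T} {inv : T -> T} :
  associative mul -> left_id e mul -> left_inverse e inv mul -> right_id e mul.
Proof.
move=> mulA mul1g mulVg a.
have mulgV : mul a (inv a) = e.
  rewrite -[mul a (inv a)]mul1g -(mulVg (inv a)) -mulA (mulA (inv a) a).
  by rewrite mulVg mul1g.
by rewrite -(mulVg a) mulA mulgV mul1g.
Qed.

Lemma eq_is_RN_deriv (dsp : measure_display) (T : measurableType dsp)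
    (R : realType) (nu nu' mu : set T -> \bar R) (f : T -> R) :
  (forall A, measurable A -> nu' A = nu A) ->
  is_RN_deriv nu mu f -> is_RN_deriv nu' mu f.
Proof. by move=> nu'E [mf f_ge0 nuE]; split=> // A mA; rewrite nu'E // nuE. Qed.

Lemma expR_bracket_shift (R : realType) (a b c C r y : R) :
  `|b - c| <= r ->
  expR (- a * b - C) <= y <= expR (- a * b + C) ->
  expR (- a * c - (C + `|a| * r)) <= y <= expR (- a * c + (C + `|a| * r)).
Proof.
move=> bc_le /andP[lo hi].
have : `|a * b - a * c| <= `|a| * r by rewrite -mulrBr normrM ler_wpM2l.
rewrite ler_norml => /andP[ab_lo ab_hi].
apply/andP; split.
- by apply: le_trans lo; rewrite ler_expR; lra.
- by apply: le_trans hi _; rewrite ler_expR; lra.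
Qed.

Theorem mainTheorem10
  (R : realType)
  (* the space X with its metric and basepoint *)
  (X : Type) (dX : X -> X -> R) (x0 : X)
  (dX_refl : forall x, dX x x = 0)
  (dX_sym : forall x y, dX x y = dX y x)
  (dX_tri : forall x y z, dX x z <= dX x y + dX y z)
  (dX_sep : forall x y, dX x y = 0 -> x = y)
  (* the group Gamma *)
  (Gam : choiceType) (mul : Gam -> Gam -> Gam) (e : Gam) (inv : Gam -> Gam)
  (mulA : forall a b c, mul a (mul b c) = mul (mul a b) c)
  (mul1g : forall a, mul e a = a)
  (mulVg : forall a, mul (inv a) a = e)
  (* proper cocompact isometric action on X *)
  (act : Gam -> X -> X)
  (act1 : forall x, act e x = x)
  (actM : forall g h x, act (mul g h) x = act g (act h x))
  (act_isom : forall g x y, dX (act g x) (act g y) = dX x y)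
  (act_proper : forall x (r : R), finite_set [set g | dX (act g x) x <= r])
  (act_cocompact : exists D : R, forall x, exists g, dX x (act g x0) <= D)
  (* critical exponent delta_Gamma, with d = orbit_dist dX act x0 *)
  (deltaG : R)
  (hdelta : limn_esup (growth_seq (orbit_dist dX act x0) e) = deltaG%:E)
  (* the fixed width k of the annuli S_m *)
  (k : R)
  (* the visual boundary, the boundary action and the Busemann functions *)
  (dsp : measure_display) (bd : measurableType dsp)
  (actb : Gam -> bd -> bd)
  (actb_meas : forall g, measurable_fun setT (actb g))
  (actb1 : forall xi, actb e xi = xi)
  (actbM : forall g h xi, actb (mul g h) xi = actb g (actb h xi))
  (bus : bd -> Gam -> Gam -> R)
  (* Patterson-Sullivan family {rho_x} *)
  (rho : Gam -> {measure set bd -> \bar R})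
  (rho_prob : forall x, rho x setT = 1%E)
  (rho_equiv : forall g x A, measurable A ->
      pushforward (rho x) (actb g) A = rho (mul g x) A)
  (rho_RN_exists : forall x y, exists f, is_RN_deriv (rho y) (rho x) f)
  (rho_RN : exists C0 : R, forall x y f, is_RN_deriv (rho y) (rho x) f ->
      {ae rho x, forall xi,
         expR (- deltaG * bus xi y x - C0) <= f xi <=
         expR (- deltaG * bus xi y x + C0)})
  (* shadows O(g) and the constant Delta *)
  (O : Gam -> set bd) (Delta : R)
  (hDelta : exists R0 : R, forall (n r : nat) g xi h,
      (n%:R + Delta < r%:R) ->
      sphereG (orbit_dist dX act x0) e k r%:R g -> O g xi ->
      sphereG (orbit_dist dX act x0) e k n%:R h ->
      `| bus xi h e - busG (orbit_dist dX act x0) g h e | <= R0) :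
  exists C : R, forall (n r : nat) (g h : Gam),
    (n%:R + Delta < r%:R) ->
    sphereG (orbit_dist dX act x0) e k r%:R g ->
    sphereG (orbit_dist dX act x0) e k n%:R h ->
    forall f, is_RN_deriv (pushforward (rho e) (actb h)) (rho e) f ->
    {ae rho e, forall xi, O g xi ->
       expR (- deltaG * busG (orbit_dist dX act x0) g h e - C) <= f xi <=
       expR (- deltaG * busG (orbit_dist dX act x0) g h e + C)}.
Proof.
have mulg1 := left_group_mulg1 mulA mul1g mulVg.
case: rho_RN => C0 rho_RN_bound; case: hDelta => R0 bus_shadow.
exists (C0 + `|deltaG| * R0) => n r g h nr_lt Sg Sh f f_RN.
have f_RN_rho_h : is_RN_deriv (rho h) (rho e) f.
  by apply: eq_is_RN_deriv f_RN => A mA; rewrite -{1}(mulg1 h) -rho_equiv.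
apply: filterS (rho_RN_bound e h f f_RN_rho_h) => xi f_bracket Oxi.
exact: expR_bracket_shift (bus_shadow n r g xi h nr_lt Sg Oxi Sh) f_bracket.
Qed.
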